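(* As formal power series in $z$ with coefficients polynomials in $t$, \[ F(t,z)=\sum_{n\ge 0}\sum_{w\in S_n} t^{\operatorname{dep}(w)} z^n = \cfrac{1}{1 - z - \cfrac{tz^2}{1 - 3tz - \cfrac{4t^3 z^2}{1 - 5t^2 z - \cfrac{9t^5 z^2}{1 - 7t^3 z - \cdots}}}}, \] i.e. the $J$-fraction whose $i$-th level ($i\ge 0$) has denominator term $1-(2i+1)t^i z$ and whose numerator linking level $i-1$ to level $i$ ($i\ge1$) is $i^2 t^{2i-1} z^2$.
   Context: $S_0$ consists of the single empty permutation, of depth $0$. For $w\in S_n$, the depth is $\operatorname{dep}(w)=\sum_{i:\,w(i)>i}(w(i)-i)$, i.e. half the total displacement $\sum_{i=1}^n |w(i)-i|$. *)

From HB Require Import structures.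
From mathcomp Require Import all_boot all_order all_algebra all_fingroup.
Set Implicit Arguments. Unset Strict Implicit. Unset Printing Implicit Defensive.
Import GRing.Theory.
Local Open Scope ring_scope.

(* Depth of a permutation w of {0,...,n-1} (0-based indices; equivalent to the
   1-based definition): sum over i with w(i) > i of (w(i) - i).  Truncated nat
   subtraction makes the terms with w(i) <= i vanish. *)
Definition dep (n : nat) (w : 'S_n) : nat := (\sum_(i < n) (w i - i))%N.

Definition ps := nat -> {poly int}.

(* Coefficients of the multiplicative inverse of a series f with f 0 = 1:
   g_0 = 1, g_(m+1) = - sum_(j=1..m+1) f_j g_(m+1-j). *)
Fixpoint ps_inv_seq (f : ps) (n : nat) : seq {poly int} :=
  match n with
  | O => [:: 1]
  | m.+1 => let s := ps_inv_seq f m in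
            rcons s (- \sum_(k < m.+1) f k.+1 * nth 0 s (m - k)%N)
  end.

Definition ps_inv (f : ps) : ps := fun n => nth 0 (ps_inv_seq f n) n.

(* J-fraction coefficients: level i has denominator term 1 - b_i z, with
   b_i = (2i+1) t^i; the numerator linking level i-1 to level i (i >= 1) is
   a_i z^2 with a_i = i^2 t^(2i-1). *)
Definition jb (i : nat) : {poly int} := (2 * i + 1)%:R *: 'X^i.
Definition ja (i : nat) : {poly int} := (i ^ 2)%:R *: 'X^(2 * i - 1).

(* jtail d i = the finite J-fraction starting at level i and using levels
   i, i+1, ..., i+d (the last level is 1/(1 - b_(i+d) z)). *)
Fixpoint jtail (d i : nat) : ps :=
  match d with
  | O => ps_inv (fun n => if n == 0%N then 1 else if n == 1%N then - jb i else 0)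
  | d'.+1 =>
      let T := jtail d' i.+1 in
      ps_inv (fun n => match n with
                       | O => 1
                       | 1 => - jb i
                       | m.+2 => - (ja i.+1 * T m)
                       end)
  end.

Definition jconv (N : nat) : ps := jtail N 0.

(* Scan a permutation w from left to right.  Just before position c the arcs
   x -> w x with x < c <= w x are open; their number is the height of a
   Motzkin path, and dep w is the sum of these heights.  At a position with h
   open arcs, the admissible moves (weighted by t^(height after the move))
   add up to the level weight (2h+1) t^h, the up weight t^(h+1) and the down
   weight h^2 t^(h-1), so sum_w t^dep(w) counts weighted Motzkin paths of
   length n from height 0 to 0.  Flajolet's first-passage decomposition shows
   that the N-th convergent counts the same paths kept below height N, which
   for N >= n is no restriction. *)

From mathcomp Require Import all_boot all_order all_algebra all_fingroup.
From mathcomp Require Import zify ring.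
Set Implicit Arguments. Unset Strict Implicit. Unset Printing Implicit Defensive.
Import GRing.Theory.
Local Open Scope ring_scope.

Lemma size_ps_inv_seq (f : ps) n : size (ps_inv_seq f n) = n.+1.
Proof. by elim: n => //= n IH; rewrite size_rcons IH. Qed.

Lemma nth_ps_inv_seq (f : ps) n i :
  (i <= n)%N -> nth 0 (ps_inv_seq f n) i = ps_inv f i.
Proof.
elim: n => [|n IH]; first by rewrite leqn0 => /eqP->.
rewrite leq_eqVlt => /orP[/eqP->//|lt_in].
by rewrite /= nth_rcons size_ps_inv_seq lt_in IH.
Qed.

Lemma ps_invS (f : ps) m :
  ps_inv f m.+1 = - \sum_(k < m.+1) f k.+1 * ps_inv f (m - k)%N.
Proof.
rewrite /ps_inv /= nth_rcons size_ps_inv_seq ltnn eqxx; congr (- _).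
by apply: eq_bigr => k _; rewrite nth_ps_inv_seq // leq_subr.
Qed.

Definition jd (h : nat) : {poly int} := (h ^ 2)%:R *: 'X^(h.-1).

Lemma ja_updown i : ja i.+1 = 'X^(i.+1) * jd i.+1.
Proof. by rewrite /ja /jd -scalerAr -exprD; congr (_ *: 'X^_); lia. Qed.

(* Motzkin paths of length m from height h to height f inside the strip
   [f, L]: a level step at height h weighs jb h, an up step from h weighs
   'X^(h.+1), a down step from h weighs jd h. *)
Fixpoint mpaths_strip (L f m h : nat) : {poly int} :=
  match m with
  | O => (h == f)%:R
  | m'.+1 => jb h * mpaths_strip L f m' h
             + (if (h < L)%N then 'X^(h.+1) * mpaths_strip L f m' h.+1 else 0)
             + (if (f < h)%N then jd h * mpaths_strip L f m' h.-1 else 0)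
  end.

Fixpoint mpaths (m h : nat) : {poly int} :=
  match m with
  | O => (h == 0%N)%:R
  | m'.+1 => jb h * mpaths m' h + 'X^(h.+1) * mpaths m' h.+1 + jd h * mpaths m' h.-1
  end.

(* Cut a path from h > f to f at its first visit to f: before it the path
   stays in [f.+1, L] and ends at f.+1, then it steps down. *)
Lemma mpaths_strip_first_passage L f m h : (f < h <= L)%N ->
  mpaths_strip L f m h =
  \sum_(j < m) mpaths_strip L f.+1 j h * jd f.+1 * mpaths_strip L f (m.-1 - j) f.
Proof.
elim: m h => [|m IH] h /andP[fh hL]; first by rewrite big_ord0 /= (gtn_eqF fh).
rewrite big_ord_recl /= subn0.
set P := mpaths_strip L f.+1; set Q := mpaths_strip L f.
rewrite [X in _ = _ + X](eq_bigr (fun j : 'I_m =>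
   jb h * (P j h * jd f.+1 * Q (m.-1 - j)%N f)
   + (if (h < L)%N then 'X^(h.+1) * (P j h.+1 * jd f.+1 * Q (m.-1 - j)%N f) else 0)
   + (if (f.+1 < h)%N then jd h * (P j h.-1 * jd f.+1 * Q (m.-1 - j)%N f) else 0)));
  last first.
  move=> j _; rewrite /bump /= add1n add0n (_ : (m - j.+1)%N = (m.-1 - j)%N); last by lia.
  by case: (h < L)%N; case: (f.+1 < h)%N; rewrite ?mulr0 ?mul0r ?addr0 ?add0r; ring.
rewrite big_split /= big_split /= -mulr_sumr -(IH h) ?fh ?hL //.
have up : (if (h < L)%N then 'X^(h.+1) * Q m h.+1 else 0) =
  \sum_(i < m) (if (h < L)%N then 'X^(h.+1) * (P i h.+1 * jd f.+1 * Q (m.-1 - i)%N f)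
                else 0).
  case: ifP => hL'; last by rewrite big1.
  by rewrite -mulr_sumr -(IH h.+1) // (leq_trans fh) //=.
have down : jd h * Q m h.-1 = (h == f.+1)%:R * jd f.+1 * Q m f +
  \sum_(i < m) (if (f.+1 < h)%N then jd h * (P i h.-1 * jd f.+1 * Q (m.-1 - i)%N f)
                else 0).
  case: (ltngtP h f.+1) => hf; first by move: fh; rewrite ltnNge -ltnS hf.
    rewrite -mulr_sumr -(IH h.-1); last by apply/andP; split; lia.
    by rewrite /= mulr0n !mul0r add0r.
  by rewrite big1_eq hf /= mulr1n mul1r addr0.
by rewrite up down -/Q; ring.
Qed.

Lemma jtail_mpaths_strip d i n : jtail d i n = mpaths_strip (i + d) i n i.
Proof.
elim: d i n => [|d IHd] i n; elim/ltn_ind: n => -[|m] IH; try by rewrite /= eqxx.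
  rewrite /= ps_invS big_ord_recl /= addn0 ltnn big1 => [|k _]; last by rewrite mul0r.
  by rewrite !addr0 mulNr opprK subn0; move: (IH m (ltnSn m)); rewrite addn0 /= => ->.
transitivity (jb i * jtail d.+1 i m +
   \sum_(k < m) ja i.+1 * jtail d i.+1 k * jtail d.+1 i (m.-1 - k)%N).
  rewrite /= ps_invS big_ord_recl /= subn0 mulNr opprD opprK -sumrN.
  congr (_ + _); apply: eq_bigr => k _.
  by rewrite mulNr opprK /bump add1n add0n (_ : (m - k.+1)%N = (m.-1 - k)%N) //; lia.
rewrite [RHS]/= (_ : (i < i + d.+1)%N); last by lia.
rewrite ltnn addr0 IH // (@mpaths_strip_first_passage (i + d.+1) i m i.+1); last first.
  by apply/andP; split; lia.
rewrite mulr_sumr; congr (_ + _); apply: eq_bigr => k _.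
rewrite IHd addSnnS IH; last by lia.
by rewrite ja_updown; ring.
Qed.

Lemma mpaths_strip_high L m h : (h + m <= L)%N -> mpaths_strip L 0 m h = mpaths m h.
Proof.
elim: m h => [|m IH] h hm //=.
have hL : (h < L)%N by lia.
rewrite hL (IH h) 1?(IH h.+1) 1?(IH h.-1); try (by lia).
by case: h {hL} hm => [|h] _ //=; rewrite /jd scale0r mul0r.
Qed.

Lemma sum_nat_eq1 j N (B : bool) : (1 <= j < N)%N ->
  (\sum_(1 <= c < N) ((c == j) && B : nat) = B)%N.
Proof.
case/andP=> j1 jN; rewrite (@big_cat_nat _ _ _ j) //=; last exact: ltnW.
rewrite big1_seq => [|c /andP[_]]; last first.
  by rewrite mem_index_iota => /andP[_ cj]; rewrite (ltn_eqF cj).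
rewrite big_ltn // eqxx big1_seq => [|c /andP[_]]; first by rewrite addn0.
by rewrite mem_index_iota => /andP[jc _]; rewrite (gtn_eqF jc).
Qed.

Lemma sum_between a b N : (b < N)%N ->
  (\sum_(1 <= c < N) ((a < c) && (c <= b) : nat) = b - a)%N.
Proof.
elim: b => [|b IH] bN.
  rewrite big1_seq => [//|c /andP[_]]; rewrite mem_index_iota => /andP[c1 _].
  by case: c c1 => // c _; rewrite andbF.
transitivity (\sum_(1 <= c < N)
    (((a < c) && (c <= b) : nat) + ((c == b.+1) && (a < b.+1) : nat)))%N.
  apply: eq_bigr => c _; rewrite (leq_eqVlt c b.+1) ltnS.
  case: (c =P b.+1) => [->|_] /=; last by case: (_ && _).
  by rewrite andbT ltnn andbF.
rewrite big_split /= IH ?(ltnW bN) // sum_nat_eq1 ?bN //.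
by case: (ltnP a b.+1) => ab /=; lia.
Qed.

Lemma sum_eq_in (T : finType) (A : {set T}) (a : T) (b : bool) :
  (\sum_(y in A) ((a == y) && b : nat) = (a \in A) && b)%N.
Proof.
case aA: (a \in A); last first.
  by rewrite big1 // => y yA; case: eqP => // ay; rewrite -ay aA in yA.
rewrite (bigD1 a) //= eqxx big1 ?addn0 // => y /andP[_ ya].
by rewrite eq_sym (negbTE ya).
Qed.

Section Scan.
Variable n : nat.
Local Notation pmap := ('I_n -> option 'I_n).
Implicit Types (p : pmap) (w : 'S_n) (k : nat).

(* A state at position k: p x = Some y records a closed arc x -> y with
   x, y < k; a source x < k with p x = None is an open arc (w x >= k); the free
   values are those below k that are still to be hit from the right. *)
Definition agrees k p w (x : 'I_n) : bool :=
  if p x is Some y then w x == y else (k <= w x)%N.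
Definition consistent k p w : bool := [forall x : 'I_n, (x < k)%N ==> agrees k p w x].
Definition is_state k p : Prop :=
  [/\ forall x : 'I_n, (k <= x)%N -> p x = None,
      forall x y : 'I_n, p x = Some y -> (y < k)%N &
      forall x1 x2 y : 'I_n, p x1 = Some y -> p x2 = Some y -> x1 = x2].
Definition open_arcs k p : {set 'I_n} := [set x : 'I_n | (x < k)%N && (p x == None)].
Definition free_values k p : {set 'I_n} :=
  [set y : 'I_n | (y < k)%N && [forall x, p x != Some y]].
Definition assign p (a b : 'I_n) : pmap := fun x => if x == a then Some b else p x.

Definition crossings (c : nat) w : nat := (\sum_(x : 'I_n) ((x < c) && (c <= w x) : nat))%N.
Definition depth_after k w : nat := (\sum_(k.+1 <= c < n.+1) crossings c w)%N.
Definition state_gf k p : {poly int} := \sum_(w | consistent k p w) 'X^(depth_after k w).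

Lemma dep_crossings w : dep w = depth_after 0 w.
Proof.
rewrite /dep /depth_after /crossings exchange_big /=; apply: eq_bigr => x _.
by rewrite sum_between // ltnS ltnW.
Qed.

Lemma eq_perm_inv w (x y : 'I_n) : (w x == y) = (x == (w^-1)%g y).
Proof. by apply/eqP/eqP => [<-|->]; rewrite ?permK ?permKV. Qed.

Lemma is_stateS k p : is_state k p -> is_state k.+1 p.
Proof.
case=> dom rng inj; split => // [x kx|x y /rng /ltnW //].
by apply: dom; apply: ltnW.
Qed.

Lemma is_state_assign k p (a b : 'I_n) : is_state k p -> (a < k)%N -> (b < k)%N ->
  p a = None -> (forall x, p x != Some b) -> is_state k (assign p a b).
Proof.
case=> dom rng inj ak bk pa pb; split.
- move=> x kx; rewrite /assign; case: eqP => [xa|_]; last exact: dom.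
  by rewrite xa in kx; move: (leq_trans ak kx); rewrite ltnn.
- by move=> x y; rewrite /assign; case: eqP => [_ [<-]//|_ /rng].
- move=> x1 x2 y; rewrite /assign; case: eqP => [->|_]; case: eqP => [->|_] //.
  + by move=> [<-] H; move: (pb x2); rewrite H eqxx.
  + by move=> H [Hy]; move: (pb x1); rewrite H Hy eqxx.
  + exact: inj.
Qed.

Lemma card_free_values k p : is_state k p -> #|free_values k p| = #|open_arcs k p|.
Proof.
case=> dom rng inj.
pose A := [set x : 'I_n | (x < k)%N].
pose D := [set x : 'I_n | p x != None].
pose R := [set y : 'I_n | [exists x, p x == Some y]].
have -> : open_arcs k p = A :\: D by apply/setP => x; rewrite !inE negbK andbC.
have -> : free_values k p = A :\: R.
  by apply/setP => y; rewrite !inE negb_exists andbC.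
rewrite !cardsD.
have -> : A :&: D = D.
  apply/setIidPr/subsetP => x; rewrite !inE; case px: (p x) => //= _.
  by rewrite ltnNge; apply/negP => /dom; rewrite px.
have -> : A :&: R = R.
  by apply/setIidPr/subsetP => y; rewrite !inE => /existsP[x /eqP /rng].
suff -> : R = (fun x => odflt x (p x)) @: D.
  by rewrite card_in_imset // => x1 x2; rewrite !inE; case p1: (p x1) => [y1|] //;
    case p2: (p x2) => [y2|] //= _ _ y12; apply: (inj _ _ y1); rewrite // p2 y12.
apply/setP => y; rewrite inE; apply/existsP/imsetP => [[x /eqP px]|[x]].
  by exists x; rewrite ?inE px.
by move=> + ->; rewrite inE => px; exists x; move: px; case: (p x).
Qed.

Lemma crossings_open_arcs c p w : is_state c p -> consistent c p w ->
  crossings c w = #|open_arcs c p|.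
Proof.
case=> _ rng _ /forallP C.
rewrite -sum1_card big_mkcond /=; apply: eq_bigr => x _; rewrite inE.
case xc: (x < c)%N => //=; move: (C x); rewrite xc /= /agrees.
case px: (p x) => [y|] /=; last by move->.
by move/eqP => ->; rewrite leqNgt (rng _ _ px).
Qed.

Lemma state_gf_final p : is_state n p -> state_gf n p = (#|open_arcs n p| == 0%N)%:R.
Proof.
case=> dom rng inj.
have -> : state_gf n p = #|[pred w | consistent n p w]|%:R.
  rewrite /state_gf (eq_bigr (fun _ => 1)) => [|w _]; last by rewrite /depth_after big_geq.
  by rewrite sumr_const.
case: (set_0Vmem (open_arcs n p)) => [P0|[x xP]]; last first.
  rewrite (_ : _ == _ = false); last first.
    by apply/negbTE; rewrite cards_eq0; apply/set0Pn; exists x.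
  rewrite eq_card0 // => w; rewrite !inE; apply/negbTE/negP => /forallP/(_ x).
  by move: xP; rewrite inE => /andP[xn /eqP px]; rewrite xn /= /agrees px leqNgt ltn_ord.
rewrite P0 cards0 eqxx.
have total x : p x != None.
  apply/negP => /eqP px; have : x \in open_arcs n p by rewrite inE ltn_ord px.
  by rewrite P0 inE.
pose f x := odflt x (p x).
have f_inj : injective f.
  move=> x1 x2; rewrite /f; move: (total x1) (total x2).
  case p1: (p x1) => [y1|] //; case p2: (p x2) => [y2|] //= _ _ y12.
  by apply: (inj _ _ y1) => //; rewrite p2 y12.
rewrite (@eq_card _ _ (pred1 (perm f_inj))) ?card1 // => w /=.
rewrite !inE; apply/forallP/eqP => [C|->] .
  apply/permP => x; rewrite permE /f; move: (C x); rewrite ltn_ord /= /agrees.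
  by case px: (p x) => [y|]; [move/eqP | move: (total x); rewrite px].
move=> x; rewrite ltn_ord /= /agrees permE /f.
by case px: (p x) => [y|] //=; move: (total x); rewrite px.
Qed.

Definition move_gf (kk : 'I_n) p' : {poly int} :=
  \sum_w (consistent kk.+1 p' w)%:R * 'X^(depth_after kk w).

Lemma move_gfE (kk : 'I_n) p' : is_state kk.+1 p' ->
  move_gf kk p' = 'X^#|open_arcs kk.+1 p'| * state_gf kk.+1 p'.
Proof.
move=> st'; rewrite /state_gf mulr_sumr [RHS]big_mkcond /=; apply: eq_bigr => w _.
case cw: (consistent kk.+1 p' w); last by rewrite mul0r.
by rewrite mul1r /depth_after big_ltn ?ltnS ?ltn_ord // exprD (crossings_open_arcs st').
Qed.

Section Step.
Variables (kk : 'I_n) (p : pmap).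
Hypothesis st : is_state kk p.

Local Notation P := (open_arcs kk p).
Local Notation Q := (free_values kk p).

(* The five moves at position kk, named as in the lemmas below:
     fix         assign p kk kk               kk is a fixed point;
     back y      assign p kk y, y in Q        w kk = y, kk is hit from the right;
     pass x      assign p x kk, x in P        the open arc from x ends at kk,
                                              and w kk > kk;
     close x y   assign (assign p x kk) kk y  the open arc from x ends at kk,
                                              and w kk = y;
     open        p                            kk is hit from the right and
                                              w kk > kk. *)

Lemma kk_notin_open_arcs : kk \notin P.
Proof. by rewrite inE ltnn. Qed.

Lemma ltnS_ord (x : 'I_n) : x != kk -> (x < kk.+1)%N = (x < kk)%N.
Proof.
move=> xk; rewrite ltnS leq_eqVlt; case: eqP => //= xk'.
by move: xk; rewrite (val_inj xk') eqxx.
Qed.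

Lemma open_arcs_back b : open_arcs kk.+1 (assign p kk b) = P.
Proof.
apply/setP => x; rewrite !inE /assign; case: (x =P kk) => [->|/eqP xk] /=.
  by rewrite ltnn andbC.
by rewrite ltnS_ord.
Qed.

Lemma open_arcs_pass x0 : x0 \in P -> open_arcs kk.+1 (assign p x0 kk) = kk |: (P :\ x0).
Proof.
case: st => dom _ _ x0P; have x0k : (x0 < kk)%N by move: x0P; rewrite inE => /andP[].
apply/setP => x; rewrite !inE /assign; case: (x =P kk) => [->|/eqP xk] /=.
  by rewrite ltnSn (_ : (kk == x0) = false) ?dom //; apply/eqP => E; rewrite E ltnn in x0k.
by rewrite ltnS_ord //; case: (x =P x0) => [->|_]; rewrite 1?andbC.
Qed.

Lemma open_arcs_close x0 y : x0 \in P ->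
  open_arcs kk.+1 (assign (assign p x0 kk) kk y) = P :\ x0.
Proof.
move=> x0P; apply/setP => x; rewrite !inE /assign.
case: (x =P kk) => [->|/eqP xk] /=; first by rewrite ltnn andbC /= andbF.
by rewrite ltnS_ord //; case: (x =P x0) => [->|_]; rewrite 1?andbC.
Qed.

Lemma open_arcs_open : open_arcs kk.+1 p = kk |: P.
Proof.
case: st => dom _ _; apply/setP => x; rewrite !inE.
case: (x =P kk) => [->|/eqP xk] /=; first by rewrite ltnSn dom.
by rewrite ltnS_ord.
Qed.

Lemma assign_lt q (b x : 'I_n) : (x < kk)%N -> assign q kk b x = q x.
Proof. by move=> xk; rewrite /assign; case: eqP => // E; rewrite E ltnn in xk. Qed.

Lemma card_open_arcs_pass x0 : x0 \in P -> #|open_arcs kk.+1 (assign p x0 kk)| = #|P|.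
Proof.
move=> x0P; rewrite open_arcs_pass // cardsU1 (cardsD1 x0 P) x0P in_setD1.
by rewrite (negbTE kk_notin_open_arcs) andbF.
Qed.

Lemma card_open_arcs_close x0 y : x0 \in P ->
  #|open_arcs kk.+1 (assign (assign p x0 kk) kk y)| = #|P|.-1.
Proof. by move=> x0P; rewrite open_arcs_close // (cardsD1 x0 P) x0P. Qed.

Lemma card_open_arcs_open : #|open_arcs kk.+1 p| = #|P|.+1.
Proof. by rewrite open_arcs_open cardsU1 kk_notin_open_arcs. Qed.

Lemma is_state_back y : y \in Q -> is_state kk.+1 (assign p kk y).
Proof.
have [dom _ _] := st; rewrite inE => /andP[yk /forallP yQ].
by apply: is_state_assign => //; [exact: is_stateS | exact: ltnW | exact: dom].
Qed.

Lemma is_state_fix : is_state kk.+1 (assign p kk kk).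
Proof.
have [dom rng _] := st.
apply: is_state_assign => //; [exact: is_stateS | exact: dom |].
by move=> x; apply/eqP => /rng; rewrite ltnn.
Qed.

Lemma is_state_pass x0 : x0 \in P -> is_state kk.+1 (assign p x0 kk).
Proof.
rewrite inE => /andP[x0k /eqP px0]; have [_ rng _] := st.
apply: is_state_assign => //; [exact: is_stateS | exact: ltnW |].
by move=> x; apply/eqP => /rng; rewrite ltnn.
Qed.

Lemma is_state_close x0 y : x0 \in P -> y \in Q ->
  is_state kk.+1 (assign (assign p x0 kk) kk y).
Proof.
move=> x0P; have := is_state_pass x0P; have [dom _ _] := st.
rewrite inE in x0P; case/andP: x0P => x0k _.
rewrite inE => st' /andP[yk /forallP yQ]; apply: is_state_assign => //; first exact: ltnW.
  rewrite /assign (_ : (kk == x0) = false) ?dom //.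
  by apply/eqP => E; rewrite E ltnn in x0k.
move=> z; rewrite /assign; case: (z =P x0) => _; last exact: yQ.
by apply/negP => /eqP [E]; rewrite -E ltnn in yk.
Qed.

Section Consistent.
Variable w : 'S_n.
Hypothesis cw : consistent kk p w.
Local Notation hit := ((w^-1)%g kk \in P).

Lemma consistentS p' : consistent kk.+1 p' w =
  agrees kk.+1 p' w kk && [forall x : 'I_n, (x < kk)%N ==> agrees kk.+1 p' w x].
Proof.
apply/forallP/andP => [C|[Ck /forallP C] x].
  split; first by rewrite (implyP (C kk)).
  by apply/forallP => x; apply/implyP => xk; apply: (implyP (C x)); apply: ltnW.
apply/implyP => xk; case: (x =P kk) => [->//|/eqP xk'].
by apply: (implyP (C x)); rewrite -ltnS_ord.
Qed.

(* Below kk nothing changes, except that an open arc may now end at kk. *)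
Lemma agreesS p' (x : 'I_n) : (x < kk)%N -> p' x = p x ->
  agrees kk.+1 p' w x = (x \notin P) || (x != (w^-1)%g kk).
Proof.
move=> xk px; move/forallP: cw => /(_ x); rewrite xk /= /agrees px inE xk /=.
by case: (p x) => //= kw; rewrite -eq_perm_inv ltn_neqAle kw andbT eq_sym.
Qed.

Lemma consistent_below p' : (forall x : 'I_n, (x < kk)%N -> p' x = p x) ->
  [forall x : 'I_n, (x < kk)%N ==> agrees kk.+1 p' w x] = ~~ hit.
Proof.
move=> pp'; apply/forallP/idP => [C|nhit x].
  apply/negP => hit'; have wk : ((w^-1)%g kk < kk)%N by move: hit'; rewrite inE => /andP[].
  by move: (C ((w^-1)%g kk)); rewrite wk agreesS ?pp' // hit' eqxx.
apply/implyP => xk; rewrite agreesS ?pp' //.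
by case: (x =P (w^-1)%g kk) => [->|_]; rewrite ?nhit ?orbT.
Qed.

Lemma consistent_below_pass x0 p' : x0 \in P ->
  (forall x : 'I_n, (x < kk)%N -> p' x = assign p x0 kk x) ->
  [forall x : 'I_n, (x < kk)%N ==> agrees kk.+1 p' w x] = ((w^-1)%g kk == x0).
Proof.
move=> x0P pp'; have x0k : (x0 < kk)%N by move: x0P; rewrite inE => /andP[].
apply/forallP/eqP => [C|wx0 x].
  by move: (C x0); rewrite x0k /= /agrees pp' // /assign eqxx eq_perm_inv => /eqP.
apply/implyP => xk; case: (x =P x0) => [->|/eqP xx0].
  by rewrite /agrees pp' // /assign eqxx eq_perm_inv wx0.
by rewrite agreesS ?wx0 ?xx0 ?orbT // pp' // /assign (negbTE xx0).
Qed.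

Lemma mem_free_values : (w kk \in Q) = (w kk < kk)%N.
Proof.
have [dom _ _] := st; rewrite inE; apply/andP/idP => [[]//|wk]; split => //.
apply/forallP => x; apply/negP => /eqP px.
have xk : (x < kk)%N by rewrite ltnNge; apply/negP => /dom; rewrite px.
move/forallP: cw => /(_ x); rewrite xk /= /agrees px => /eqP /perm_inj xkk.
by rewrite xkk ltnn in xk.
Qed.

Lemma consistent_back y : consistent kk.+1 (assign p kk y) w = (w kk == y) && ~~ hit.
Proof.
rewrite consistentS consistent_below => [|x xk]; last exact: assign_lt.
by rewrite /agrees /assign eqxx.
Qed.

Lemma consistent_open : consistent kk.+1 p w = (kk < w kk)%N && ~~ hit.
Proof.
by rewrite consistentS consistent_below //; have [dom _ _] := st; rewrite /agrees dom.
Qed.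

Lemma consistent_pass x0 : x0 \in P ->
  consistent kk.+1 (assign p x0 kk) w = ((w^-1)%g kk == x0) && (kk < w kk)%N.
Proof.
move=> x0P; have x0k : (x0 < kk)%N by move: x0P; rewrite inE => /andP[].
rewrite consistentS (consistent_below_pass x0P) // andbC; congr (_ && _).
have [dom _ _] := st; rewrite /agrees /assign; case: eqP => [E|_]; last by rewrite dom.
by rewrite E ltnn in x0k.
Qed.

Lemma consistent_close x0 y : x0 \in P ->
  consistent kk.+1 (assign (assign p x0 kk) kk y) w = ((w^-1)%g kk == x0) && (w kk == y).
Proof.
move=> x0P; rewrite consistentS (consistent_below_pass x0P) => [|x xk]; last first.
  exact: assign_lt.
by rewrite andbC /agrees /assign eqxx.
Qed.

End Consistent.

Lemma consistent_pred p' w :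
  (forall x : 'I_n, (x < kk)%N -> p' x = p x \/ (p x = None /\ p' x = Some kk)) ->
  consistent kk.+1 p' w -> consistent kk p w.
Proof.
move=> pp' /forallP C; apply/forallP => x; apply/implyP => xk.
move: (C x); rewrite ltnS (ltnW xk) /= /agrees; case: (pp' x xk) => [->|[-> ->]].
  by case: (p x) => // /ltnW.
by move/eqP => ->.
Qed.

Lemma consistent_moves w : (consistent kk p w : nat) =
  (consistent kk.+1 (assign p kk kk) w + \sum_(y in Q) consistent kk.+1 (assign p kk y) w
   + \sum_(x in P) consistent kk.+1 (assign p x kk) w
   + \sum_(x in P) \sum_(y in Q) consistent kk.+1 (assign (assign p x kk) kk y) w
   + consistent kk.+1 p w)%N.
Proof.
case cw: (consistent kk p w); last first.
  have no p' : (forall x : 'I_n, (x < kk)%N ->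
      p' x = p x \/ (p x = None /\ p' x = Some kk)) -> consistent kk.+1 p' w = false.
    by move=> pp'; apply: contraFF cw; apply: consistent_pred.
  have open_kk x0 : x0 \in P -> forall x : 'I_n, (x < kk)%N ->
      assign p x0 kk x = p x \/ (p x = None /\ assign p x0 kk x = Some kk).
    move=> x0P x xk; rewrite /assign; case: (x =P x0) => [->|]; last by left.
    by right; move: x0P; rewrite inE => /andP[_ /eqP].
  rewrite no => [|x xk]; last by left; apply: assign_lt.
  rewrite big1 => [|y _]; last by rewrite no // => x xk; left; apply: assign_lt.
  rewrite big1 => [|x0 x0P]; last by rewrite no //; apply: open_kk.
  rewrite big1 => [|x0 x0P]; last first.
    by rewrite big1 // => y _; rewrite no // => x xk; rewrite assign_lt //; apply: open_kk.
  by rewrite no // => x _; left.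
rewrite consistent_back // consistent_open //.
have -> : (\sum_(y in Q) consistent kk.+1 (assign p kk y) w =
           (w kk \in Q) && ((w^-1)%g kk \notin P))%N.
  by rewrite -sum_eq_in; apply: eq_bigr => y _; rewrite consistent_back.
have -> : (\sum_(x in P) consistent kk.+1 (assign p x kk) w =
           ((w^-1)%g kk \in P) && (kk < w kk)%N)%N.
  by rewrite -sum_eq_in; apply: eq_bigr => x xP; rewrite consistent_pass.
have -> : (\sum_(x in P) \sum_(y in Q) consistent kk.+1 (assign (assign p x kk) kk y) w
           = ((w^-1)%g kk \in P) && (w kk \in Q))%N.
  rewrite -sum_eq_in; apply: eq_bigr => x xP; rewrite andbC -sum_eq_in.
  by apply: eq_bigr => y _; rewrite consistent_close // andbC.
rewrite mem_free_values //.
have hit_nfix : (w^-1)%g kk \in P -> (w kk == kk) = false.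
  rewrite eq_perm_inv => hit; apply/negbTE/negP => /eqP wkk.
  by move: hit; rewrite -wkk inE ltnn.
move: hit_nfix; case: ((w^-1)%g kk \in P) => /= [/(_ isT)|_].
  by rewrite !andbF -val_eqE /=; case: ltngtP.
by rewrite !andbT -val_eqE /=; case: ltngtP.
Qed.

Lemma state_gf_moves : state_gf kk p =
  move_gf kk (assign p kk kk) + \sum_(y in Q) move_gf kk (assign p kk y)
  + \sum_(x in P) move_gf kk (assign p x kk)
  + \sum_(x in P) \sum_(y in Q) move_gf kk (assign (assign p x kk) kk y)
  + move_gf kk p.
Proof.
rewrite /move_gf [in RHS]exchange_big [X in _ + X + _ + _]exchange_big /=.
under [X in _ + X + _]eq_bigr => x _ do rewrite exchange_big.
rewrite [X in _ + X + _]exchange_big -!big_split /= /state_gf big_mkcond /=.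
apply: eq_bigr => w _.
have -> : (if consistent kk p w then 'X^(depth_after kk w) else 0)
          = (consistent kk p w)%:R * 'X^(depth_after kk w) :> {poly int}.
  by rewrite mulr_natl; case: (consistent kk p w).
rewrite (consistent_moves w) !natrD !mulrDl !natr_sum !mulr_suml.
by congr (_ + _ + _ + _ + _); apply: eq_bigr => x _; rewrite natr_sum mulr_suml.
Qed.

End Step.

Lemma state_gf_mpaths m k p : (k + m = n)%N -> is_state k p ->
  state_gf k p = mpaths m #|open_arcs k p|.
Proof.
elim: m k p => [|m IH] k p km st.
  by rewrite addn0 in km; subst k; rewrite state_gf_final.
have kn : (k < n)%N by rewrite -km addnS ltnS leq_addr.
pose kk := Ordinal kn; rewrite -[k]/(nat_of_ord kk) in st *.
have step p' : is_state kk.+1 p' ->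
    move_gf kk p' = 'X^#|open_arcs kk.+1 p'| * mpaths m #|open_arcs kk.+1 p'|.
  by move=> st'; rewrite move_gfE // IH // addSnnS.
set h := #|open_arcs kk p|.
have back y : y \in free_values kk p -> move_gf kk (assign p kk y) = 'X^h * mpaths m h.
  by move=> yQ; rewrite step ?open_arcs_back //; apply: is_state_back.
have pass x : x \in open_arcs kk p -> move_gf kk (assign p x kk) = 'X^h * mpaths m h.
  by move=> xP; rewrite step ?card_open_arcs_pass //; apply: is_state_pass.
have close x y : x \in open_arcs kk p -> y \in free_values kk p ->
    move_gf kk (assign (assign p x kk) kk y) = 'X^(h.-1) * mpaths m h.-1.
  by move=> xP yQ; rewrite step ?card_open_arcs_close //; apply: is_state_close.
rewrite state_gf_moves // step ?open_arcs_back; last exact: is_state_fix.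
rewrite step ?card_open_arcs_open //; last exact: is_stateS.
rewrite (eq_bigr _ back) (eq_bigr _ pass).
rewrite (eq_bigr _ (fun x xP => eq_bigr _ (close x ^~ xP))).
rewrite !sumr_const card_free_values // -/h [mpaths m.+1 h]/= /jb /jd !scaler_nat.
ring.
Qed.

End Scan.

Theorem mainTheorem4 :
  forall n : nat, exists N0 : nat, forall N : nat, (N0 <= N)%N ->
    jconv N n = \sum_(w : 'S_n) 'X^(dep w) :> {poly int}.
Proof.
move=> n; exists n => N nN.
rewrite /jconv jtail_mpaths_strip add0n mpaths_strip_high //.
pose p0 : 'I_n -> option 'I_n := fun=> None.
have arcs0 : open_arcs 0 p0 = set0 by apply/setP => x; rewrite !inE.
rewrite -[in mpaths _ _](cards0 'I_n) -arcs0 -state_gf_mpaths //.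
by apply: eq_big => [w|w _]; [apply/forallP | rewrite dep_crossings].
Qed.
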